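(* Let $p>3$ be prime, $t\in\{1,3,p,3p\}$, and $1\le r\le 3p-1$ with $\gcd(r,3p)=1$. Then \[\mathcal{S}(1,r,t)=\begin{cases}0 & \text{if } r\equiv1\pmod3,\\ |r|_p-1 & \text{if } r\equiv 2\pmod 3\text{ and } |r|_p\text{ is odd},\\ \frac{|r|_p}{2} & \text{if } r\equiv2\pmod 3\text{ and }|r|_p\text{ is even}.\end{cases}\]
   Context: $|r|_m$ is the multiplicative order of $r$ modulo $m$ (with $|r|_1=1$). $S_k(x):=1+x+\cdots+x^{k-1}$, $S_0:=0$. For $m\ge1$ with $\gcd(r,m)=1$, $\kappa(m,r,t):=\dfrac{m|r|_m}{\gcd(m,\,tS_{|r|_m}(r))}$. For $d\in\{1,3,p,3p\}$, $\Lambda(d,r,t):=\{\ell>0:\ \ell \text{ divides } \frac{|r|_{3p}}{\gcd(\kappa(d,r,t),|r|_{3p})}\text{ and }\gcd(r^{\ell\kappa(d,r,t)}-1,3p)=d\}$, and $\mathcal{S}(d,r,t):=\sum_{\ell\in\Lambda(d,r,t)} d\,\phi\!\left(\frac{|r|_{3p}}{\ell\gcd(\kappa(d,r,t),|r|_{3p})}\right)$, with $\phi$ Euler's function. *)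

From mathcomp Require Import all_boot.
Set Implicit Arguments. Unset Strict Implicit. Unset Printing Implicit Defensive.

(* |r|_m : multiplicative order of r modulo m, i.e. the least k >= 1 with
   r^k = 1 (mod m).  We search k in 1..m (when gcd(r,m)=1 and m >= 1 the
   order is <= totient m <= m, so the search always succeeds).  For m = 1
   this gives 1, matching the convention |r|_1 = 1. *)
Definition mord (m r : nat) : nat :=
  (find (fun k => r ^ k.+1 == 1 %[mod m]) (iota 0 m)).+1.

Definition Ssum (k x : nat) : nat := \sum_(i < k) x ^ i.

Definition kappa (m r t : nat) : nat :=
  m * mord m r %/ gcdn m (t * Ssum (mord m r) r).

Definition Nq (p d r t : nat) : nat :=
  mord (3 * p) r %/ gcdn (kappa d r t) (mord (3 * p) r).

Definition inLambda (p d r t l : nat) : bool :=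
  [&& 0 < l, l %| Nq p d r t & gcdn (r ^ (l * kappa d r t) - 1) (3 * p) == d].

Definition Scal (p d r t : nat) : nat :=
  \sum_(l <- divisors (Nq p d r t) | inLambda p d r t l)
     d * totient (mord (3 * p) r %/ (l * gcdn (kappa d r t) (mord (3 * p) r))).

From mathcomp Require Import all_boot cyclic.

Set Implicit Arguments.
Unset Strict Implicit.
Unset Printing Implicit Defensive.

(* If r = 1 (mod 3)
   then |r|_3 = 1 and Lambda is empty.  Otherwise |r|_3 = 2 and Lambda consists of
   the odd divisors of N not divisible by o = |r|_p.  For odd o, N = 2o and these
   are the proper divisors l of o, with phi(2o/l) = phi(o/l); for even o, N = o and
   they are all the odd divisors of o.  Gauss' identity sum_{d | n} phi(n/d) = n then
   gives o - 1, resp. o - o/2, because the even divisors 2e of o = 2h contribute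
   sum_{e | h} phi(h/e) = h. *)

Lemma totient_leq n : totient n <= n.
Proof.
rewrite totient_count_coprime -[leqRHS](subn0 n) -[n - 0]muln1 -sum_nat_const_nat.
by apply: leq_sum => d _; apply: leq_b1.
Qed.

Section MultiplicativeOrder.

Variables m r : nat.

Let P k := r ^ k.+1 == 1 %[mod m].

Lemma mord_modn : mord m (r %% m) = mord m r.
Proof. by rewrite /mord; congr S; apply: eq_find => k; rewrite /= modnXm. Qed.

Lemma mord_min k : 0 < k < mord m r -> r ^ k != 1 %[mod m].
Proof.
case: k => // k; rewrite /= /mord ltnS => lt_k; have lt_km : k < m.
  by apply: leq_trans lt_k _; rewrite -[m in _ <= m](size_iota 0) find_size.
by have := before_find 0 lt_k; rewrite nth_iota // add0n => ->.
Qed.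

Hypotheses (m_gt0 : 0 < m) (co_rm : coprime r m).

Lemma expn_mord : r ^ mord m r = 1 %[mod m].
Proof.
have hasP : has P (iota 0 m).
  apply/hasP; exists (totient m).-1.
    by rewrite mem_iota add0n /= prednK ?totient_gt0 // totient_leq.
  by rewrite /P prednK ?totient_gt0 //; apply/eqP; apply: Euler_exp_totient.
have := nth_find 0 hasP; rewrite nth_iota ?add0n => [/eqP // |].
by rewrite -[m in _ < m](size_iota 0) -has_find.
Qed.

Lemma mord_dvdn k : (r ^ k == 1 %[mod m]) = (mord m r %| k).
Proof.
have Ek : r ^ k = r ^ (k %% mord m r) %[mod m].
  rewrite {1}(divn_eq k (mord m r)) expnD [_ * mord m r]mulnC expnM -modnMml.
  by rewrite -modnXm expn_mord modnXm exp1n modnMml mul1n.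
rewrite /dvdn Ek; have [-> | nz_k] := posnP (k %% mord m r); first by rewrite eqxx.
by rewrite (negbTE (@mord_min (k %% mord m r) _)) // nz_k ltn_pmod.
Qed.

End MultiplicativeOrder.

Lemma mordM m n r : 0 < m -> 0 < n -> coprime m n -> coprime r (m * n) ->
  mord (m * n) r = lcmn (mord m r) (mord n r).
Proof.
move=> m_gt0 n_gt0 co_mn; rewrite coprimeMr => /andP[co_rm co_rn].
have mord_mulE k : (mord (m * n) r %| k) = (mord m r %| k) && (mord n r %| k).
  by rewrite -!mord_dvdn ?muln_gt0 ?m_gt0 ?coprimeMr ?co_rm // chinese_remainder.
apply/eqP; rewrite eqn_dvd dvdn_lcm -!mord_mulE dvdnn.
by rewrite mord_mulE dvdn_lcml dvdn_lcmr.
Qed.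

Lemma coprime_expn_sub1 q r l : prime q -> coprime r q ->
  coprime (r ^ l - 1) q = ~~ (mord q r %| l).
Proof.
move=> q_pr co_rq; have r_gt0 : 0 < r.
  by case: r co_rq => //; rewrite /coprime gcd0n => /eqP q1; rewrite q1 in q_pr.
rewrite coprime_sym prime_coprime // -eqn_mod_dvd ?expn_gt0 ?r_gt0 //.
by rewrite mord_dvdn ?prime_gt0.
Qed.

Lemma divisorsE n : 0 < n -> divisors n = [seq d <- iota 0 n.+1 | d %| n].
Proof.
move=> n_gt0; apply: (irr_sorted_eq ltn_trans ltnn).
- exact: sorted_divisors_ltn.
- exact/sorted_filter/iota_ltn_sorted/ltn_trans.
move=> d; rewrite mem_filter mem_iota -dvdn_divisors //=.
by case dvd_dn: (d %| n); rewrite // ltnS dvdn_leq.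
Qed.

Lemma big_divisors_codivisor (R : Type) (idx : R) (op : Monoid.com_law idx)
    n (F : nat -> R) : 0 < n ->
  \big[op/idx]_(d <- divisors n) F (n %/ d) = \big[op/idx]_(d <- divisors n) F d.
Proof.
move=> n_gt0; have divnK' d : d %| n -> n %/ (n %/ d) = d.
  by move=> dvd_dn; rewrite divnA // mulKn.
rewrite -(big_map (divn n) xpredT); apply/perm_big/uniq_perm.
- rewrite map_inj_in_uniq ?divisors_uniq // => a b.
  by rewrite -!dvdn_divisors // => /divnK' {2}<- /divnK' {2}<- ->.
- exact: divisors_uniq.
move=> d; apply/mapP/idP => [[e] | dvd_dn].
  by rewrite -!dvdn_divisors // => dvd_en ->; apply: dvdn_div.
rewrite -dvdn_divisors // in dvd_dn.
by exists (n %/ d); rewrite ?divnK' // -dvdn_divisors ?dvdn_div.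
Qed.

Lemma sum_totient_codivisors n : 0 < n -> \sum_(d <- divisors n) totient (n %/ d) = n.
Proof.
move=> n_gt0; rewrite big_divisors_codivisor // divisorsE // big_filter.
by rewrite -[RHS]sum_totient_dvd -(big_mkord (dvdn^~ n)) /index_iota subn0.
Qed.

Lemma sum_totient_proper_codivisors n : 0 < n ->
  \sum_(d <- divisors n | d != n) totient (n %/ d) = n.-1.
Proof.
move=> n_gt0; rewrite -[in RHS](sum_totient_codivisors n_gt0).
by rewrite (bigD1_seq n) ?divisors_id ?divisors_uniq //= divnn n_gt0.
Qed.

Lemma totient_double_odd m : odd m -> totient (2 * m) = totient m.
Proof. by move=> m_odd; rewrite totient_coprime ?coprime2n // mul1n. Qed.

Lemma odd_divisors_double o : odd o -> [seq d <- divisors (2 * o) | odd d] = divisors o.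
Proof.
move=> o_odd; have o_gt0 : 0 < o by case: o o_odd.
apply: (irr_sorted_eq ltn_trans ltnn); rewrite ?sorted_divisors_ltn //.
  exact/sorted_filter/sorted_divisors_ltn/ltn_trans.
move=> d; rewrite mem_filter -!dvdn_divisors ?muln_gt0 //.
case d_odd: (odd d) => /=; first by rewrite Gauss_dvdr // coprimen2 d_odd.
apply/esym/negP => dvd_do; move: o_odd; rewrite -(divnK dvd_do) oddM d_odd.
by rewrite andbF.
Qed.

Lemma even_divisors_double h : 0 < h ->
  [seq d <- divisors (2 * h) | ~~ odd d] = map (muln 2) (divisors h).
Proof.
move=> h_gt0; apply: (irr_sorted_eq ltn_trans ltnn).
- exact/sorted_filter/sorted_divisors_ltn/ltn_trans.
- by rewrite (homo_sorted (e := ltn)) ?sorted_divisors_ltn // => a b; rewrite ltn_pmul2l.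
move=> d; rewrite mem_filter -dvdn_divisors ?muln_gt0 //; apply/andP/mapP.
  rewrite -dvdn2 => -[/dvdnP[e ->]]; rewrite mulnC dvdn_pmul2l // => dvd_eh.
  by exists e; rewrite -?dvdn_divisors.
case=> e; rewrite -dvdn_divisors // => dvd_eh ->.
by rewrite oddM /= dvdn_pmul2l.
Qed.

Lemma sum_totient_odd_codivisors n : 0 < n -> ~~ odd n ->
  \sum_(d <- divisors n | odd d) totient (n %/ d) = n %/ 2.
Proof.
move=> n_gt0; rewrite -dvdn2 => /dvdnP[h n_eq]; rewrite mulnC in n_eq.
have h_gt0 : 0 < h by rewrite n_eq muln_gt0 in n_gt0.
have sum_even : \sum_(d <- divisors n | ~~ odd d) totient (n %/ d) = h.
  rewrite -big_filter n_eq even_divisors_double // big_map.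
  by rewrite -[RHS](sum_totient_codivisors h_gt0); apply: eq_bigr => d _; rewrite divnMl.
have := sum_totient_codivisors n_gt0; rewrite (bigID odd) /= sum_even.
set s := \sum_(_ <- _ | _) _ => s_eq.
by rewrite n_eq mulKn //; apply/(@addIn h); rewrite s_eq addnn -mul2n.
Qed.

Lemma sum_totient_odd_codivisors_double o : odd o ->
  \sum_(d <- divisors (2 * o) | odd d && ~~ (o %| d)) totient (2 * o %/ d) = o.-1.
Proof.
move=> o_odd; have o_gt0 : 0 < o by case: o o_odd.
rewrite -big_filter_cond odd_divisors_double // -(sum_totient_proper_codivisors o_gt0).
rewrite big_seq_cond [RHS]big_seq_cond; apply: eq_big => d.
  by rewrite -dvdn_divisors //; case dvd_do: (d %| o); rewrite //= eqn_dvd dvd_do.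
rewrite -dvdn_divisors // => /andP[dvd_do _].
rewrite -muln_divA // totient_double_odd //.
by move: o_odd; rewrite -{1}(divnK dvd_do) oddM => /andP[].
Qed.

Lemma mord1 r : mord 1 r = 1.
Proof. by rewrite /mord /= modn1. Qed.

Lemma kappa1 r t : kappa 1 r t = 1.
Proof. by rewrite /kappa mord1 gcd1n divn1. Qed.

Lemma Scal1E p r t : prime p -> p != 3 -> coprime r (3 * p) ->
  Scal p 1 r t = \sum_(l <- divisors (lcmn (mord 3 r) (mord p r))
                       | ~~ (mord 3 r %| l) && ~~ (mord p r %| l))
                   totient (lcmn (mord 3 r) (mord p r) %/ l).
Proof.
move=> p_pr p_neq3 co_r3p; have p_gt0 := prime_gt0 p_pr.
have co_3p : coprime 3 p by rewrite prime_coprime // dvdn_prime2 // eq_sym.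
have [co_r3 co_rp] : coprime r 3 /\ coprime r p by apply/andP; rewrite -coprimeMr.
rewrite /Scal /Nq kappa1 gcd1n divn1 mordM //.
set N := lcmn _ _; have N_gt0 : 0 < N by rewrite lcmn_gt0.
rewrite big_seq_cond [RHS]big_seq_cond; apply: eq_big => [l | l _].
  rewrite /inLambda /Nq kappa1 gcd1n divn1 mordM // -/N muln1 -dvdn_divisors //.
  case dvd_lN: (l %| N); rewrite //= (dvdn_gt0 N_gt0 dvd_lN) /=.
  by rewrite [_ == 1]coprimeMr !coprime_expn_sub1.
by rewrite mul1n muln1.
Qed.

Theorem lemma5p8 (p t r : nat) :
  prime p -> 3 < p ->
  t \in [:: 1; 3; p; 3 * p] ->
  1 <= r <= 3 * p - 1 -> coprime r (3 * p) ->
  [/\ r = 1 %[mod 3] -> Scal p 1 r t = 0,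
      r = 2 %[mod 3] -> odd (mord p r) -> Scal p 1 r t = mord p r - 1
    & r = 2 %[mod 3] -> ~~ odd (mord p r) -> Scal p 1 r t = mord p r %/ 2].
Proof.
move=> p_pr p_gt3 _ _ co_r3p; have p_neq3 : p != 3 by rewrite gtn_eqF.
rewrite Scal1E // -(mord_modn 3 r); set o := mord p r.
split => [-> | -> o_odd | -> o_even] /=.
- by rewrite big_pred0 // => l; rewrite dvd1n.
- have -> : lcmn 2 o = 2 * o by rewrite /lcmn (eqP (_ : coprime 2 o)) ?coprime2n ?divn1.
  under eq_bigl => l do rewrite dvdn2 negbK.
  by rewrite sum_totient_odd_codivisors_double // subn1.
- have dvd_2o : 2 %| o by rewrite dvdn2.
  rewrite (lcmn_idPr dvd_2o) -sum_totient_odd_codivisors //.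
  apply: eq_bigl => l; rewrite dvdn2 negbK; case: (boolP (odd l)) => //= l_odd.
  by apply/negP => /(dvdn_trans dvd_2o); rewrite dvdn2 l_odd.
Qed.
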